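(* For every integer $p\ge0$, $$\sum_{k=1}^\infty\frac{1}{(2k-1)(2k)^p(2k+1)}=\begin{cases}\dfrac12-\displaystyle\sum_{j=1}^{p/2}2^{-2j}\zeta(2j), & p\text{ even},\\[8pt] -\dfrac12+\ln 2-\displaystyle\sum_{j=1}^{(p-1)/2}2^{-(2j+1)}\zeta(2j+1), & p\text{ odd},\end{cases}$$ where empty sums are $0$.
   Context: $\zeta(s)=\sum_{k\ge1}k^{-s}$ denotes the Riemann zeta function. *)

From Stdlib Require Import Reals.
From Coquelicot Require Import Coquelicot.
Open Scope R_scope.

(* Riemann zeta at an integer s >= 2: zeta(s) = sum_{k>=1} k^{-s}.
   Coquelicot series are indexed from 0, so term n is 1/(n+1)^s. *)
Definition zeta (s : nat) : R := Series (fun n : nat => / (INR (n + 1)) ^ s).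

Definition cor2_term (p k : nat) : R :=
  / ((2 * INR k - 1) * (2 * INR k) ^ p * (2 * INR k + 1)).

Definition cor2_rhs (p : nat) : R :=
  if Nat.even p then
    1 / 2 - sum_n_m (fun j : nat => / 2 ^ (2 * j) * zeta (2 * j)) 1 (Nat.div2 p)
  else
    - (1 / 2) + ln 2
      - sum_n_m (fun j : nat => / 2 ^ (2 * j + 1) * zeta (2 * j + 1)) 1 (Nat.div2 p).

(* With a = 2k, 1/((a-1) a^(p+2) (a+1)) = 1/((a-1) a^p (a+1)) - 1/a^(p+2), so the
   series for p + 2 is the series for p minus 2^-(p+2) zeta(p+2), and only p = 0 and
   p = 1 remain.  Both telescope: for p = 0 the term is (1/(2k-1) - 1/(2k+1))/2, and
   for p = 1 partial fractions reduce the partial sums to H_(2n) - H_n up to a vanishing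
   error; comparing 1/j with ln j - ln (j-1) and ln (j+1) - ln j squeezes H_(2n) - H_n
   between ln 2 - 1/(2n+1) and ln 2. *)

From Stdlib Require Import Reals Lra Lia Arith.
From Coquelicot Require Import Coquelicot.
Open Scope R_scope.

Lemma sum_n_m_le_loc (u v : nat -> R) (a b : nat) :
  (forall k, (a <= k <= b)%nat -> u k <= v k) ->
  sum_n_m u a b <= sum_n_m v a b.
Proof.
  intros Huv.
  rewrite (sum_n_m_ext_loc u (fun k => Rmin (u k) (v k))).
  - apply sum_n_m_le. intros k. apply Rmin_r.
  - intros k Hk. symmetry. apply Rmin_left, Huv, Hk.
Qed.

Lemma sum_n_m_telescope (g : nat -> R) (a b : nat) : (a <= b)%nat ->
  sum_n_m (fun j => g (S j) - g j) a b = g (S b) - g a.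
Proof.
  induction 1 as [|b Hab IH].
  - rewrite sum_n_n. reflexivity.
  - rewrite sum_n_Sm, IH by lia. simpl. change (plus ?x ?y) with (x + y). ring.
Qed.

Lemma is_series_telescope (g : nat -> R) (l : R) :
  is_lim_seq g l -> is_series (fun n => g (S n) - g n) (l - g O).
Proof.
  intros Hg. change (is_lim_seq (sum_n (fun n => g (S n) - g n)) (l - g O)).
  apply is_lim_seq_ext with (fun N => g (S N) - g O).
  - intros N. symmetry. apply sum_n_m_telescope. lia.
  - apply is_lim_seq_minus'; [now apply is_lim_seq_incr_1 in Hg | apply is_lim_seq_const].
Qed.

Lemma ln_1p_le (y : R) : -1 < y -> ln (1 + y) <= y.
Proof.
  intros Hy. rewrite <- (ln_exp y) at 2.
  apply ln_le; [lra | apply exp_ineq1_le].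
Qed.

Lemma ln_succ_sub_ln_le_inv (x : R) : 0 < x -> ln (x + 1) - ln x <= / x.
Proof.
  intros Hx. rewrite <- ln_div by lra.
  replace ((x + 1) / x) with (1 + / x) by (field; lra).
  apply ln_1p_le. pose proof (Rinv_0_lt_compat x Hx). lra.
Qed.

Lemma inv_le_ln_sub_ln_pred (x : R) : 1 < x -> / x <= ln x - ln (x - 1).
Proof.
  intros Hx.
  assert (Hinv : / x < 1) by (rewrite <- Rinv_1; apply Rinv_lt_contravar; lra).
  pose proof (ln_1p_le (- / x) ltac:(lra)) as Hle.
  replace (1 + - / x) with ((x - 1) / x) in Hle by (field; lra).
  rewrite ln_div in Hle by lra. lra.
Qed.

Definition harmonic_tail (n : nat) : R := sum_n_m (fun j => / INR j) (S n) (2 * n).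

Lemma harmonic_tail_S (n : nat) : harmonic_tail (S n) =
  harmonic_tail n + / INR (2 * n + 1) + / INR (2 * n + 2) - / INR (S n).
Proof.
  unfold harmonic_tail.
  assert (Hhead := sum_Sn_m (fun j => / INR j) (S n) (2 * S n) ltac:(lia)).
  replace (2 * S n)%nat with (S (S (2 * n))) in * by lia.
  rewrite 2!sum_n_Sm in Hhead by lia.
  repeat change (plus ?x ?y) with (x + y) in Hhead.
  replace (2 * n + 1)%nat with (S (2 * n)) by lia.
  replace (2 * n + 2)%nat with (S (S (2 * n))) by lia.
  lra.
Qed.

Lemma harmonic_tail_le_ln2 (n : nat) : (0 < n)%nat -> harmonic_tail n <= ln 2.
Proof.
  intros Hn. unfold harmonic_tail.
  rewrite (sum_n_m_le_loc _ (fun j => ln (INR (S j) - 1) - ln (INR j - 1)))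
    by (intros j Hj; rewrite S_INR, Rplus_minus_r;
        apply inv_le_ln_sub_ln_pred, lt_1_INR; lia).
  rewrite (sum_n_m_telescope (fun j => ln (INR j - 1))) by lia.
  rewrite !S_INR, mult_INR. simpl.
  pose proof (lt_0_INR n ltac:(lia)).
  replace ((1 + 1) * INR n + 1 - 1) with (2 * INR n) by ring.
  replace (INR n + 1 - 1) with (INR n) by ring.
  rewrite ln_mult by lra. lra.
Qed.

Lemma ln2_sub_inv_le_harmonic_tail (n : nat) : (0 < n)%nat ->
  ln 2 - / (2 * INR n + 1) <= harmonic_tail n.
Proof.
  intros Hn. unfold harmonic_tail.
  rewrite <- (sum_n_m_le_loc (fun j => ln (INR (S j)) - ln (INR j)))
    by (intros j Hj; rewrite S_INR; apply ln_succ_sub_ln_le_inv, lt_0_INR; lia).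
  rewrite (sum_n_m_telescope (fun j => ln (INR j))) by lia.
  rewrite !S_INR, mult_INR. simpl.
  pose proof (pos_INR n).
  pose proof (ln_succ_sub_ln_le_inv (2 * INR n + 1) ltac:(lra)) as Hstep.
  replace (2 * INR n + 1 + 1) with (2 * (INR n + 1)) in Hstep by ring.
  replace ((1 + 1) * INR n + 1) with (2 * INR n + 1) by ring.
  rewrite ln_mult in Hstep by lra. lra.
Qed.

Lemma is_lim_seq_inv_2n1 : is_lim_seq (fun n => / (2 * INR n + 1)) 0.
Proof.
  replace (Finite 0) with (Rbar_inv p_infty) by reflexivity.
  apply is_lim_seq_inv; [|discriminate].
  apply is_lim_seq_le_p_loc with INR; [|apply is_lim_seq_INR].
  exists O. intros n _. pose proof (pos_INR n). lra.
Qed.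

Lemma is_lim_seq_harmonic_tail : is_lim_seq harmonic_tail (ln 2).
Proof.
  apply is_lim_seq_le_le_loc with (fun n => ln 2 - / (2 * INR n + 1)) (fun _ => ln 2).
  - exists 1%nat. intros n Hn. split.
    + apply ln2_sub_inv_le_harmonic_tail. lia.
    + apply harmonic_tail_le_ln2. lia.
  - replace (Finite (ln 2)) with (Finite (ln 2 - 0)) by (f_equal; ring).
    apply is_lim_seq_minus'; [apply is_lim_seq_const | apply is_lim_seq_inv_2n1].
  - apply is_lim_seq_const.
Qed.

Lemma is_series_cor2_term_0 :
  is_series (fun n => cor2_term 0 (n + 1)) (cor2_rhs 0).
Proof.
  set (g n := - / 2 * / (2 * INR n + 1)).
  replace (cor2_rhs 0) with (0 - g O).
  - apply is_series_ext with (fun n => g (S n) - g n).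
    + intros n. unfold g, cor2_term. rewrite S_INR, plus_INR. simpl.
      pose proof (pos_INR n). field. lra.
    + apply is_series_telescope.
      replace (Finite 0) with (Rbar_mult (- / 2) 0) by (simpl; f_equal; ring).
      apply is_lim_seq_scal_l, is_lim_seq_inv_2n1.
  - unfold cor2_rhs, g. simpl. rewrite sum_n_m_zero by lia.
    change zero with 0. field.
Qed.

Lemma is_series_cor2_term_1 :
  is_series (fun n => cor2_term 1 (n + 1)) (cor2_rhs 1).
Proof.
  set (g n := harmonic_tail n + / 2 * / (2 * INR n + 1)).
  replace (cor2_rhs 1) with ((ln 2 + / 2 * 0) - g O).
  - apply is_series_ext with (fun n => g (S n) - g n).
    + intros n. unfold g, cor2_term. rewrite harmonic_tail_S.
      rewrite !S_INR, !plus_INR, !mult_INR. simpl.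
      pose proof (pos_INR n). field. repeat split; lra.
    + apply is_series_telescope, is_lim_seq_plus'.
      * apply is_lim_seq_harmonic_tail.
      * apply (is_lim_seq_scal_l _ (/ 2) 0), is_lim_seq_inv_2n1.
  - unfold cor2_rhs, g, harmonic_tail. simpl. rewrite !sum_n_m_zero by lia.
    change zero with 0. field.
Qed.

Lemma cor2_term_SS (p k : nat) : (0 < k)%nat ->
  cor2_term (S (S p)) k = cor2_term p k - / 2 ^ S (S p) * / INR k ^ S (S p).
Proof.
  intros Hk. unfold cor2_term.
  assert (H1 : 1 <= INR k) by (apply (le_INR 1); lia).
  assert (Hpow : 0 < (2 * INR k) ^ p) by (apply pow_lt; lra).
  rewrite <- Rinv_mult, <- Rpow_mult_distr. simpl.
  field. repeat split; lra.
Qed.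

Lemma ex_series_zeta (s : nat) : (2 <= s)%nat ->
  ex_series (fun n => / INR (n + 1) ^ s).
Proof.
  intros Hs.
  apply (@ex_series_le R_AbsRing R_CompleteNormedModule _
           (fun n => scal 4 (cor2_term 0 (n + 1)))).
  - intros n. change (Rabs (/ INR (n + 1) ^ s) <= 4 * cor2_term 0 (n + 1)).
    unfold cor2_term. rewrite plus_INR. change (INR 1) with 1.
    set (x := INR n + 1).
    (* 4 * cor2_term 0 k = 1 / (k^2 - 1/4) dominates 1 / k^2 *)
    assert (Hx : 1 <= x) by (pose proof (pos_INR n); unfold x; lra).
    assert (Hxs : x ^ 2 <= x ^ s) by (apply Rle_pow; [lra | lia]).
    rewrite Rabs_pos_eq by (left; apply Rinv_0_lt_compat, pow_lt; lra).
    replace (4 * / ((2 * x - 1) * (2 * x) ^ 0 * (2 * x + 1)))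
      with (/ (x ^ 2 - / 4)) by (simpl; field; split; nra).
    apply Rinv_le_contravar; simpl in *; nra.
  - eexists. exact (@is_series_scal_l R_AbsRing R_NormedModule 4 _ _ is_series_cor2_term_0).
Qed.

Lemma cor2_rhs_SS (p : nat) :
  cor2_rhs (S (S p)) = cor2_rhs p - / 2 ^ S (S p) * zeta (S (S p)).
Proof.
  unfold cor2_rhs. change (Nat.even (S (S p))) with (Nat.even p).
  change (Nat.div2 (S (S p))) with (S (Nat.div2 p)).
  pose proof (Nat.div2_odd p) as Hp. rewrite <- Nat.negb_even in Hp.
  destruct (Nat.even p); simpl in Hp;
    rewrite sum_n_Sm by lia; change (plus ?x ?y) with (x + y).
  - replace (2 * S (Nat.div2 p))%nat with (S (S p)) by lia. ring.
  - replace (2 * S (Nat.div2 p) + 1)%nat with (S (S p)) by lia. ring.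
Qed.

Lemma is_series_cor2_term_SS (p : nat) :
  is_series (fun n => cor2_term p (n + 1)) (cor2_rhs p) ->
  is_series (fun n => cor2_term (S (S p)) (n + 1)) (cor2_rhs (S (S p))).
Proof.
  intros Hp.
  pose proof (Series_correct _ (ex_series_zeta (S (S p)) ltac:(lia))) as Hzeta.
  apply (@is_series_scal_l R_AbsRing R_NormedModule (/ 2 ^ S (S p))) in Hzeta.
  pose proof (is_series_minus _ _ _ _ Hp Hzeta) as Hdiff.
  rewrite cor2_rhs_SS.
  apply is_series_ext with (2 := Hdiff).
  intros n. rewrite cor2_term_SS by lia. reflexivity.
Qed.

Theorem corollary2 (p : nat) :
  is_series (fun n : nat => cor2_term p (n + 1)) (cor2_rhs p).
Proof.
  induction p as [p IH] using lt_wf_ind.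
  destruct p as [|[|p]].
  - exact is_series_cor2_term_0.
  - exact is_series_cor2_term_1.
  - apply is_series_cor2_term_SS, IH. lia.
Qed.
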